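(* Suppose $Y=X\beta^*\in\mathbb{R}$, where $X\in\mathbb{R}^{1\times p}$ is a jointly continuous random vector and, for every $i\in[p]$, $\beta_i^*\in\mathcal{S}=\{a_1,\dots,a_{\mathcal{R}}\}$, where $\mathcal{S}$ is a rationally independent set known to the learner. Then the IHDR algorithm with input $(Y,\mathcal{S},X)$ terminates with $\hat\beta^*=\beta^*$ with probability $1$, after at most polynomial in $p$ and $\mathcal{R}$ arithmetic operations on real numbers.
   Context: A random vector $X\in\mathbb{R}^p$ is jointly continuous if it has a joint density with respect to Lebesgue measure on $\mathbb{R}^p$. A finite set $\{a_1,\dots,a_k\}\subset\mathbb{R}$ is rationally independent if $\sum q_ia_i=0$ with $q_i\in\mathbb{Q}$ implies all $q_i=0$. An integer relation for $b\in\mathbb{R}^k$ is a nonzero $m\in\mathbb{Z}^k$ with $\langle b,m\rangle=0$. IRA (integer relation algorithm, e.g. PSLQ): given $b\in\mathbb{R}^k$ admitting an integer relation, it outputs an integer relation for $b$ after $O(k^3+k^2\log\|m\|)$ arithmetic operations on reals, where $m$ is an integer relation of smallest Euclidean norm. IHDR algorithm on input $(Y,\mathcal{S},X)$: (1) form $\mathcal{L}=(X_ia_j:i\in[p],j\in[\mathcal{R}])$; (2) run IRA on $(Y,\mathcal{L})$, with output $(b_0,b_{ij}:i\in[p],j\in[\mathcal{R}])$ ($b_0$ the coefficient of $Y$, $b_{ij}$ that of $X_ia_j$); (3) if $b_0=0$ output $\hat\beta^*=0$; (4) otherwise, for each $i\in[p]$ set $\hat\beta^*_i=a_{j(i)}$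 where $j(i)$ is the smallest $j\in[\mathcal{R}]$ with $b_{ij}\neq0$; output $\hat\beta^*$. *)

From HB Require Import structures.
From mathcomp Require Import all_boot all_order all_algebra.
From mathcomp Require Import all_classical all_reals all_analysis.
Set Implicit Arguments. Unset Strict Implicit. Unset Printing Implicit Defensive.
Import Order.TTheory GRing.Theory Num.Theory.
Import numFieldNormedType.Exports.
Local Open Scope classical_set_scope.
Local Open Scope ring_scope.

Section IHDR.
Variable R : realType.

(** Integral w.r.t. Lebesgue measure on R^n (points of R^n are n-tuples),
    defined as the iterated integral over the coordinates (Tonelli). *)
Fixpoint lebint (n : nat) : (n.-tuple R -> \bar R) -> \bar R :=
  match n return (n.-tuple R -> \bar R) -> \bar R with
  | 0 => fun g => g [tuple]
  | n'.+1 => fun g =>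
      (\int[@lebesgue_measure R]_x lebint (fun t : n'.-tuple R => g (cons_tuple x t)))%E
  end.

Definition jointly_continuous (d : measure_display) (T : measurableType d)
    (P : probability T R) (p : nat) (X : T -> p.-tuple R) : Prop :=
  measurable_fun setT X /\
  exists f : p.-tuple R -> R,
    measurable_fun setT f /\ (forall t, 0 <= f t) /\
    forall A : set (p.-tuple R), measurable A ->
      P (X @^-1` A) = lebint (fun t => ((\1_A t : R) * f t)%:E).

Definition rat_indep (a : seq R) : Prop :=
  forall q : seq rat, size q = size a ->
    \sum_(i < size a) ratr (nth 0 q i) * nth 0 a i = 0 ->
    forall i, nth 0 q i = 0.

Definition int_rel (b : seq R) (m : seq int) : Prop :=
  size m = size b /\ has (fun z => z != 0) m /\
  \sum_(i < size b) (nth 0 m i)%:~R * nth 0 b i = 0.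

Definition znorm (m : seq int) : R :=
  Num.sqrt (\sum_(i < size m) ((nth 0 m i)%:~R : R) ^+ 2).

(** An integer relation algorithm, modelled as a function returning its output
    and the number of arithmetic operations on reals it performs, with
    constant C in the O(k^3 + k^2 log ||m||) bound, m a smallest relation. *)
Definition IRA := seq R -> seq int * nat.

Definition is_IRA (C : R) (ira : IRA) : Prop :=
  forall b : seq R, (exists m, int_rel b m) ->
    int_rel b (ira b).1 /\
    forall m, int_rel b m -> (forall m', int_rel b m' -> znorm m <= znorm m') ->
      ((ira b).2)%:R <= C * ((size b)%:R ^+ 3 + (size b)%:R ^+ 2 * ln (znorm m)).

(** The IHDR algorithm on input (Y, S = a, X = x); returns the estimate and
    the number of real arithmetic operations (p*R products to form L, plus
    the operations of the IRA call). *)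
Definition ihdr (ira : IRA) (Y : R) (a : seq R) (x : seq R) : seq R * nat :=
  let L := flatten [seq [seq xi * aj | aj <- a] | xi <- x] in
  let out := ira (Y :: L) in
  let m := out.1 in
  let bij i j := nth 0 m (1 + i * size a + j)%N in
  ((if head 0 m == 0 then nseq (size x) 0
    else [seq nth 0 a (find (fun j => bij i j != 0) (iota 0 (size a)))
         | i <- iota 0 (size x)]),
   (size x * size a + out.2)%N).

End IHDR.

From HB Require Import structures.
From mathcomp Require Import all_boot all_order all_algebra.
From mathcomp Require Import all_classical all_reals all_analysis.
From mathcomp Require Import zify lra.
From mathcomp Require Import measurable_realfun.
Set Implicit Arguments. Unset Strict Implicit. Unset Printing Implicit Defensive.
Import Order.TTheory GRing.Theory Num.Theory.
Local Open Scope classical_set_scope.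
Local Open Scope ring_scope.

(* For an integer vector m, the value of the relation m at the IHDR input
   (X.beta, X_i a_j) is the linear form sum_i X_i c_i(m), where
   c_i(m) = m_0 beta_i + sum_j m_(i,j) a_j.  As X has a density, almost surely
   X lies on none of the countably many hyperplanes {t | <t, c(m)> = 0} with
   c(m) <> 0.  Then every integer relation has c(m) = 0, and rational
   independence of S forces m_(i,j) = -m_0 [a_j = beta_i] with m_0 <> 0, so the
   first nonzero coefficient of each block points at beta_i.  The relation
   (1, -[a_j = beta_i]) has entries in {-1, 0, 1}, which bounds the norm of
   the shortest relation, hence the cost of the IRA call, polynomially. *)

Lemma negligible_bigcup_countable (d : measure_display) (T : measurableType d)
    (R : realType) (mu : {measure set T -> \bar R}) (I : countType) (F : I -> set T) :
  (forall i, mu.-negligible (F i)) -> mu.-negligible (\bigcup_i F i).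
Proof.
move=> negF; pose G n := if unpickle n is Some i then F i else set0.
apply: (negligibleS _ (negligible_bigcup (F := G) _)) => [w [i _ Fiw] | n].
  by exists (pickle i) => //; rewrite /G pickleK.
by rewrite /G; case: unpickle => [i|]; [exact: negF | exact: negligible_set0].
Qed.

Lemma big_ord_mul (T : Type) (idx : T) (op : Monoid.law idx) p k (G : nat -> T) :
  \big[op/idx]_(l < p * k) G l =
  \big[op/idx]_(i < p) \big[op/idx]_(j < k) G (i * k + j)%N.
Proof.
elim: p => [|p IH]; first by rewrite mul0n !big_ord0.
by rewrite big_ord_recr -IH mulSnr big_split_ord.
Qed.

Lemma nth_allpairs (S T U : Type) (x0 : S) (y0 : T) (z0 : U) (f : S -> T -> U)
    (s : seq S) (t : seq T) n i j :
  size t = n -> (i < size s)%N -> (j < n)%N ->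
  nth z0 [seq f x y | x <- s, y <- t] (i * n + j) = f (nth x0 s i) (nth y0 t j).
Proof.
move=> <-; elim: s i => [|x s IH] [|i] //= lt_i lt_j; rewrite nth_cat size_map.
  by rewrite lt_j (nth_map y0).
by rewrite mulSn -addnA ltnNge leq_addr /= addKn IH.
Qed.

Lemma index_iota0 i n : (i < n)%N -> index i (iota 0 n) = i.
Proof.
move=> lt_i; rewrite -{1}(add0n i) -(nth_iota 0 0 lt_i).
by rewrite index_uniq ?size_iota ?iota_uniq.
Qed.

Section Hyperplane.
Variable R : realType.
Local Notation mu := (@lebesgue_measure R).

Definition tdot {n} (s t : n.-tuple R) : R := \sum_(i < n) tnth s i * tnth t i.

Lemma tdot_cons n x y (s t : n.-tuple R) :
  tdot [tuple of x :: s] [tuple of y :: t] = x * y + tdot s t.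
Proof. by rewrite /tdot big_ord_recl !tnth0; under eq_bigr do rewrite !tnthS. Qed.

Lemma lebint0 n (g : n.-tuple R -> \bar R) : (forall t, g t = 0%E) -> lebint g = 0%E.
Proof.
elim: n g => [|n IH] g g0 /=; first exact: g0.
by under eq_integral do rewrite IH //; exact: integral0.
Qed.

Lemma integral_supported_at (x0 : R) (h : R -> \bar R) :
  (forall x, x != x0 -> h x = 0%E) -> (\int[mu]_x h x = 0)%E.
Proof.
move=> h0; rewrite -(integral_set1 h x0) [RHS]integral_mkcond.
apply: eq_integral => x _; rewrite patchE; case: ifPn => //.
by rewrite notin_setE /= => /eqP /h0.
Qed.

Lemma lebint_hyperplane n (c : n.-tuple R) (r : R) (g : n.-tuple R -> \bar R) :
  has (fun z => z != 0) c -> (forall t, tdot t c != r -> g t = 0%E) ->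
  lebint g = 0%E.
Proof.
elim: n c r g => [|n IH] c r g; first by rewrite tuple0.
case/tupleP: c => c0 c /= /orP nz_c g0.
have g0_cons x t : tdot t c != r - x * c0 -> g [tuple of x :: t] = 0%E.
  move=> ht; apply: g0; rewrite tdot_cons; apply: contra ht => /eqP <-.
  by rewrite addrAC subrr add0r.
have [nz_tail | zero_tail] := boolP (has (fun z => z != 0) c).
  under eq_integral => x _ do rewrite (IH c (r - x * c0) _ nz_tail (g0_cons x)).
  exact: integral0.
(* The tail of c vanishes, so the hyperplane is {t | t_0 = r / c0}. *)
have nz_c0 : c0 != 0 by case: nz_c => // nz; rewrite nz in zero_tail.
apply: (integral_supported_at (x0 := r / c0)) => x xr; apply: lebint0 => t.
apply: g0_cons; rewrite /tdot big1 => [|i _]; last first.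
  move/hasPn: zero_tail => /(_ _ (mem_tnth i c)).
  by rewrite negbK => /eqP ->; rewrite mulr0.
by apply: contra xr; rewrite eq_sym subr_eq0 => /eqP ->; rewrite mulfK.
Qed.

Lemma jointly_continuous_hyperplane_negligible (d : measure_display)
    (T : measurableType d) (P : probability T R) n (X : T -> n.-tuple R)
    (c : n.-tuple R) (r : R) :
  jointly_continuous P X -> has (fun z => z != 0) c ->
  P.-negligible [set w | tdot (X w) c = r].
Proof.
move=> [mX [f [_ [_ hP]]]] nz_c.
have mdot : measurable_fun setT (fun t : n.-tuple R => tdot t c).
  by apply: measurable_sum => i; apply: measurable_funM => //; exact: measurable_tnth.
have mH : measurable [set t : n.-tuple R | tdot t c = r].
  by rewrite -[X in measurable X]setTI; exact: mdot measurableT _ (measurable_set1 r).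
exists (X @^-1` [set t | tdot t c = r]); split => //.
  by rewrite -[X in measurable X]setTI; exact: mX.
rewrite hP //; apply: (@lebint_hyperplane n c r _ nz_c) => t /eqP ht.
by rewrite indicE memNset ?mul0r.
Qed.

Lemma ae_avoids_hyperplanes (d : measure_display) (T : measurableType d)
    (P : probability T R) n (X : T -> n.-tuple R) (I : countType)
    (c : I -> n.-tuple R) :
  jointly_continuous P X ->
  {ae P, forall w, forall i, has (fun z => z != 0) (c i) -> tdot (X w) (c i) != 0}.
Proof.
move=> jcX.
pose F i := [set w | has (fun z => z != 0) (c i) /\ tdot (X w) (c i) = 0].
apply: (negligibleS _ (negligible_bigcup_countable (F := F) _)) => [w avoid | i].
  apply: contrapT => hit; apply: avoid => i nz; apply/eqP => dot0; apply: hit.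
  by exists i.
have [nz_c | zero_c] := boolP (has (fun z => z != 0) (c i)).
  by apply: negligibleS (jointly_continuous_hyperplane_negligible 0 jcX nz_c) => w [].
by apply: negligibleS (negligible_set0 _) => w [nz_c]; rewrite nz_c in zero_c.
Qed.

End Hyperplane.

Section IntegerRelations.
Variable R : realType.

Lemma rat_indep_int_eq0 (a : seq R) (n : nat -> int) : rat_indep a ->
  \sum_(j < size a) (n j)%:~R * a`_j = 0 -> forall j, (j < size a)%N -> n j = 0.
Proof.
move=> ind sum0 j lt_j.
pose q := [seq (n j)%:Q | j <- iota 0 (size a)].
have nth_q i : (i < size a)%N -> q`_i = (n i)%:Q.
  by move=> lt_i; rewrite (nth_map 0%N) ?size_iota // nth_iota.
apply/eqP; rewrite -(intr_eq0 rat) -nth_q //; apply/eqP/ind.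
  by rewrite size_map size_iota.
by rewrite -[RHS]sum0; apply: eq_bigr => i _; rewrite nth_q // ratr_int.
Qed.

Definition sqnorm (m : seq int) : nat := (\sum_(l < size m) `|nth 0%R m l| ^ 2)%N.

Lemma znormE m : znorm R m = Num.sqrt (sqnorm m)%:R.
Proof.
rewrite /znorm /sqnorm natr_sum; congr Num.sqrt; apply: eq_bigr => l _.
by rewrite natrX natr_absz intr_norm real_normK // num_real.
Qed.

Lemma sqnorm_gt0 m : has (fun z => z != 0) m -> (0 < sqnorm m)%N.
Proof.
move/(has_nthP 0) => [l lt_l nz].
rewrite /sqnorm (bigD1 (Ordinal lt_l)) //=; apply: leq_trans (leq_addr _ _).
by rewrite expn_gt0 absz_gt0 nz.
Qed.

Lemma sqnorm_le_size m : all (fun z => `|z| <= 1)%N m -> (sqnorm m <= size m)%N.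
Proof.
move/(all_nthP 0) => small; rewrite -[X in (_ <= X)%N]card_ord -sum1_card.
apply: leq_sum => l _; have := small l (ltn_ord l).
by case: `|_|%N => [|[]].
Qed.

Lemma znorm_ge1 m : has (fun z => z != 0) m -> 1 <= znorm R m.
Proof.
by move/sqnorm_gt0 => sq_gt0; rewrite znormE -[X in X <= _]sqrtr1 ler_wsqrtr // ler1n.
Qed.

Lemma znorm_le_sqnorm m : has (fun z => z != 0) m -> znorm R m <= (sqnorm m)%:R.
Proof.
move=> nz_m; have z_ge1 := znorm_ge1 nz_m.
rewrite -[X in _ <= X](@sqr_sqrtr _ (sqnorm m)%:R) // -znormE expr2.
by rewrite ler_peMl // (le_trans ler01).
Qed.

Lemma exists_min_int_rel (b : seq R) : (exists m, int_rel b m) ->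
  exists2 m, int_rel b m & forall m', int_rel b m' -> znorm R m <= znorm R m'.
Proof.
move=> ex_rel.
have ex_sq : exists n, `[< exists2 m, int_rel b m & sqnorm m = n >].
  by case: ex_rel => m rel; exists (sqnorm m); apply/asboolP; exists m.
case: (ex_minnP ex_sq) => n /asboolP [m rel <-] min_m; exists m => // m' rel'.
by rewrite !znormE ler_wsqrtr // ler_nat; apply: min_m; apply/asboolP; exists m'.
Qed.

Lemma ira_ops_le (C : R) (ira : IRA R) (b : seq R) m0 :
  is_IRA C ira -> int_rel b m0 -> (sqnorm m0 <= size b)%N ->
  ((ira b).2)%:R <= 2 * `|C| * (size b)%:R ^+ 3.
Proof.
move=> ira_ok rel0 sq_m0.
have [m rel min_m] := exists_min_int_rel (ex_intro _ m0 rel0).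
have [_ ops] := ira_ok b (ex_intro _ m0 rel0).
have := ops m rel min_m; set K := (size b)%:R; set t := ln (znorm R m) => ops_m.
have z_ge1 : 1 <= znorm R m by apply: znorm_ge1; case: rel => _ [].
have t_ge0 : 0 <= t by exact: ln_ge0.
have t_leK : t <= K.
  apply: le_trans (ltW (ln_sublinear _)) _; first exact: lt_le_trans ltr01 z_ge1.
  apply: le_trans (min_m _ rel0) _; apply: le_trans (znorm_le_sqnorm _) _.
    by case: rel0 => _ [].
  by rewrite ler_nat.
have cost_ge0 : 0 <= K ^+ 3 + K ^+ 2 * t by rewrite addr_ge0 ?mulr_ge0 ?exprn_ge0.
apply: (le_trans ops_m); apply: le_trans (ler_wpM2r cost_ge0 (ler_norm C)) _.
have Kt_le : K ^+ 2 * t <= K ^+ 3 by rewrite [K ^+ 3]exprSr ler_wpM2l ?exprn_ge0.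
have := normr_ge0 C; nra.
Qed.

End IntegerRelations.

Section IHDR.
Variables (R : realType) (p : nat) (a : seq R) (beta : p.-tuple R).
Hypotheses (a_indep : rat_indep a) (beta_in_a : forall i, tnth beta i \in a).

Local Notation k := (size a).
Local Notation ihdr_input x :=
  (tdot x beta :: [seq xi * aj | xi <- x, aj <- a]).

Let idx i := index (tnth beta i) a.

Let ltn_idx i : (idx i < k)%N. Proof. by rewrite index_mem. Qed.

Let nth_idx i : a`_(idx i) = tnth beta i. Proof. exact: nth_index. Qed.

Definition rel_coef (m : seq int) : p.-tuple R :=
  [tuple (m`_0)%:~R * tnth beta i + \sum_(j < k) (m`_(1 + i * k + j))%:~R * a`_j
  | i < p].

Definition generic (x : p.-tuple R) :=
  forall m, has (fun z => z != 0) (rel_coef m) -> tdot x (rel_coef m) != 0.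

Lemma int_rel_sum x m :
  \sum_(l < size (ihdr_input x)) (m`_l)%:~R * (ihdr_input x)`_l =
  tdot x (rel_coef m).
Proof.
have -> : size (ihdr_input x) = (p * k).+1 by rewrite /= size_allpairs size_tuple.
rewrite big_ord_recl; under eq_bigr => l _ do rewrite lift0.
rewrite (big_ord_mul _ _ _ (fun l => (m`_l.+1)%:~R * (ihdr_input x)`_l.+1)).
rewrite /tdot mulr_sumr -big_split /=; apply: eq_bigr => i _.
rewrite tnth_mktuple mulrDr mulr_sumr mulrCA; congr (_ + _); apply: eq_bigr => j _.
by rewrite -addnA add1n /= (nth_allpairs 0 0) ?size_tuple // -tnth_nth mulrCA.
Qed.

Lemma sum_if_eq (c : int) i0 : (i0 < k)%N ->
  \sum_(j < k) (if j == i0 :> nat then c else 0)%:~R * a`_j = c%:~R * a`_i0.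
Proof.
move=> lt_i0; rewrite (bigD1 (Ordinal lt_i0)) //= eqxx big1 ?addr0 // => j.
by rewrite -val_eqE /= => /negPf ->; rewrite mul0r.
Qed.

Lemma generic_rel_coef x m : generic x -> int_rel (ihdr_input x) m ->
  forall i, tnth (rel_coef m) i = 0.
Proof.
move=> gen [_ [_ rel]] i; apply/eqP; apply: contraT => nz_i.
have := gen m; rewrite -int_rel_sum rel eqxx; apply.
by apply/hasP; exists (tnth (rel_coef m) i) => //; exact: mem_tnth.
Qed.

Lemma int_rel_entries x m : generic x -> int_rel (ihdr_input x) m ->
  forall (i : 'I_p) j, (j < k)%N ->
  m`_(1 + i * k + j) = if j == idx i then - m`_0 else 0.
Proof.
move=> gen rel i j lt_j.
pose n j := m`_(1 + i * k + j) + (if j == idx i then m`_0 else 0).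
suff /eqP : n j = 0 by rewrite addr_eq0 => /eqP ->; case: ifP; rewrite ?oppr0.
apply: (rat_indep_int_eq0 a_indep) lt_j.
rewrite -[RHS](generic_rel_coef gen rel i) tnth_mktuple addrC.
rewrite /n; under eq_bigr do rewrite intrD mulrDl.
by rewrite big_split /= sum_if_eq // nth_idx.
Qed.

Lemma int_rel_head_neq0 x m : generic x -> int_rel (ihdr_input x) m -> m`_0 != 0.
Proof.
move=> gen rel; have [size_m [nz_m _]] := rel; apply: contraTneq nz_m => m0.
apply/(has_nthP 0) => -[[|l]]; first by rewrite m0 eqxx.
rewrite size_m /= size_allpairs size_tuple ltnS => lt_l; apply/negP; rewrite negbK.
have k_gt0 : (0 < k)%N by rewrite lt0n; apply: contraTneq lt_l => ->; rewrite muln0.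
have lt_q : (l %/ k < p)%N by rewrite ltn_divLR.
rewrite (divn_eq l k) -add1n addnA (int_rel_entries gen rel (Ordinal lt_q)) ?ltn_pmod //.
by rewrite m0 oppr0; case: ifP.
Qed.

Lemma ihdr_estimate_eq (ira : IRA R) x : generic x ->
  int_rel (ihdr_input x) (ira (ihdr_input x)).1 ->
  (ihdr ira (tdot x beta) a x).1 = beta.
Proof.
move=> gen rel; have m0 := int_rel_head_neq0 gen rel.
rewrite /ihdr /= -nth0 (negbTE m0).
apply: (@eq_from_nth _ 0); rewrite size_map size_iota ?size_tuple // => i lt_i.
rewrite (nth_map 0%N) ?size_iota // nth_iota // add0n.
rewrite (@eq_in_find _ _ (pred1 (idx (Ordinal lt_i)))) => [|j]; last first.
  rewrite mem_iota => /andP[_ lt_j] /=.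
  rewrite (int_rel_entries gen rel (Ordinal lt_i)) //.
  by case: (j == _); rewrite ?oppr_eq0 ?eqxx.
by rewrite -/(index _ _) index_iota0 // nth_idx (tnth_nth 0).
Qed.

Definition canonical_rel : seq int :=
  1 :: [seq (if j == index bi a then -1 else 0) | bi <- beta, j <- iota 0 k].

Lemma canonical_rel_small : all (fun z => `|z| <= 1)%N canonical_rel.
Proof. by apply/allP => z /predU1P[-> // | /allpairsP[[bi j] [_ _ ->]]]; case: ifP. Qed.

Lemma int_rel_canonical_rel x : int_rel (ihdr_input x) canonical_rel.
Proof.
split; first by rewrite /= !size_allpairs size_iota !size_tuple.
split=> //; rewrite int_rel_sum /tdot big1 // => i _; rewrite tnth_mktuple mul1r.
under eq_bigr => j _ do rewrite -addnA add1n /= (nth_allpairs 0 0%N)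
  ?size_iota ?size_tuple // nth_iota // -tnth_nth.
by rewrite sum_if_eq ?(ltn_idx i) // (nth_idx i) mulN1r subrr mulr0.
Qed.

Lemma ihdr_correct (C : R) (ira : IRA R) x : is_IRA C ira -> generic x ->
  (ihdr ira (tdot x beta) a x).1 = beta /\
  ((ihdr ira (tdot x beta) a x).2)%:R <= (1 + 2 * `|C|) * (p + k + 1)%:R ^+ 6.
Proof.
move=> ira_ok gen; have rel0 := int_rel_canonical_rel x.
have [rel _] := ira_ok _ (ex_intro _ _ rel0).
split; first exact: ihdr_estimate_eq.
have sq0 : (sqnorm canonical_rel <= size (ihdr_input x))%N.
  by case: rel0 => <- _; exact: sqnorm_le_size canonical_rel_small.
have := ira_ops_le ira_ok rel0 sq0; rewrite /ihdr /= size_allpairs size_tuple natrD.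
have pk_le : (p * k <= (p + k + 1) ^ 6)%N.
  by apply: (@leq_trans ((p + k + 1) ^ 2)); [nia | rewrite leq_pexp2l ?addn1].
have K_le : ((p * k).+1 ^ 3 <= (p + k + 1) ^ 6)%N.
  by rewrite (_ : 6 = 2 * 3)%N // expnM leq_exp2r //; nia.
move: pk_le K_le; rewrite -!(ler_nat R) !natrX.
have := normr_ge0 C; nra.
Qed.

End IHDR.

Theorem theorem5 (R : realType) (C : R) :
  exists (c : R) (deg : nat),
  forall (d : measure_display) (T : measurableType d) (P : probability T R)
    (p : nat) (a : seq R) (beta : p.-tuple R) (X : T -> p.-tuple R) (Y : T -> R)
    (ira : IRA R),
    is_IRA C ira ->
    rat_indep a ->
    (forall i, tnth beta i \in a) ->
    jointly_continuous P X ->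
    (forall w, Y w = \sum_(i < p) tnth (X w) i * tnth beta i) ->
    {ae P, forall w,
      (ihdr ira (Y w) a (X w)).1 = beta /\
      ((ihdr ira (Y w) a (X w)).2)%:R <= c * ((p + size a + 1)%:R) ^+ deg}.
Proof.
exists (1 + 2 * `|C|), 6%N.
move=> d T P p a beta X Y ira ira_ok a_indep beta_in_a jcX defY.
apply: filterS (ae_avoids_hyperplanes (rel_coef a beta) jcX) => w generic_w.
by rewrite defY; exact: ihdr_correct.
Qed.
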